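(* Let $q$ be a prime power, $4\le n\le q$, $\alpha_1,\dots,\alpha_n\in\mathbb{F}_q$ distinct, $u_1,\dots,u_n\in\mathbb{F}_q^*$, and $H\in\mathbb{F}_q^{3\times n}$ with $H_{ab}=u_b\alpha_b^{a-1}$ (so $\ker H$ is a length-$n$ Reed–Solomon-type code of distance $4$). Then the number of $e\in\mathbb{F}_q^n$ with $|e|=2$ for which there exists $e'\in\mathbb{F}_q^n$, $e'\ne e$, $|e'|\le 2$, $He'=He$, is at most $$\frac{(n-2)(n-3)}{2(q-1)}\cdot(q-1)^2\binom{n}{2}.$$ That is, the fraction of weight-2 errors that are not the unique minimum-weight error with their syndrome is at most $\frac{(n-2)(n-3)}{2(q-1)}$.
   Context: $|e|$ denotes the Hamming weight (number of nonzero coordinates) of $e\in\mathbb{F}_q^n$. *)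

From mathcomp Require Import all_boot all_order all_algebra.
Set Implicit Arguments. Unset Strict Implicit. Unset Printing Implicit Defensive.
Import GRing.Theory Num.Theory.
Local Open Scope ring_scope.

Definition hwt (F : finFieldType) (n : nat) (v : 'rV[F]_n) : nat :=
  #|[set i : 'I_n | v 0 i != 0]|.

(* The 3 x n parity-check matrix H_{ab} = u_b * alpha_b^(a-1), a = 1..3
   (rows indexed 0..2, so the exponent is the row index). *)
Definition rsH (F : finFieldType) (n : nat) (alpha u : 'I_n -> F) : 'M[F]_(3, n) :=
  \matrix_(a < 3, b < n) (u b * alpha b ^+ a).

Definition syndrome (F : finFieldType) (n : nat) (H : 'M[F]_(3, n)) (e : 'rV[F]_n)
  : 'cV[F]_3 := H *m e^T.

Definition bad_errors (F : finFieldType) (n : nat) (H : 'M[F]_(3, n)) : {set 'rV[F]_n} :=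
  [set e : 'rV[F]_n | (hwt e == 2%N) &&
     [exists e' : 'rV[F]_n, [&& e' != e, (hwt e' <= 2)%N & syndrome H e' == syndrome H e]]].

From mathcomp Require Import all_boot all_order all_algebra ring zify.
Import Order.TTheory GRing.Theory Num.Theory.
Local Open Scope ring_scope.
Set Implicit Arguments. Unset Strict Implicit. Unset Printing Implicit Defensive.

(* Any nonzero vector in the kernel of the parity-check matrix has at least four
   nonzero coordinates: pairing the syndrome with the coefficients of a polynomial
   of degree at most 2 vanishing on all but one point alpha_j of the support gives
   u_j v_j P(alpha_j) = 0.  Hence if two distinct vectors of weight at most 2 share
   a syndrome, their supports are disjoint pairs, and an error e of weight 2 is bad
   only through a second pair T' disjoint from supp e.  For fixed supports T, T',
   the bad errors on T are determined by one coordinate (the difference of two of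
   them, corrected by their partners, is a kernel vector of weight at most 3), so
   there are at most q - 1 of them; summing over the C(n,2) C(n-2,2) pairs of
   supports gives the bound. *)

Definition supp (F : finFieldType) (n : nat) (v : 'rV[F]_n) : {set 'I_n} :=
  [set i : 'I_n | v 0 i != 0].

Section Support.
Variables (F : finFieldType) (n : nat).
Implicit Types (v w : 'rV[F]_n) (T : {set 'I_n}).

Lemma notin_supp_sub v T j : supp v \subset T -> j \notin T -> v 0 j = 0.
Proof.
by move=> /subsetP vT; apply: contraNeq => vj; apply: vT; rewrite inE.
Qed.

Lemma supp_sub v w T : supp v \subset T -> supp w \subset T -> supp (v - w) \subset T.
Proof.
move=> vT wT; apply/subsetP => j; rewrite inE !mxE; apply: contraR => jT.
by rewrite (notin_supp_sub vT) // (notin_supp_sub wT) // subrr.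
Qed.

Lemma suppB v w : supp (v - w) \subset supp v :|: supp w.
Proof. by apply: supp_sub; [apply: subsetUl | apply: subsetUr]. Qed.

End Support.

Lemma syndromeB (F : finFieldType) (n : nat) (H : 'M[F]_(3, n)) (v w : 'rV[F]_n) :
  syndrome H (v - w) = syndrome H v - syndrome H w.
Proof. by rewrite /syndrome linearB /= mulmxBr. Qed.

Section ReedSolomon.
Variables (F : finFieldType) (n : nat) (alpha u : 'I_n -> F).
Hypotheses (alpha_inj : injective alpha) (u_neq0 : forall b, u b != 0).
Local Notation H := (rsH alpha u).

Lemma syndrome_pairing (P : {poly F}) (v : 'rV[F]_n) : (size P <= 3)%N ->
  \sum_b u b * v 0 b * P.[alpha b] = \sum_(i < 3) P`_i * syndrome H v i 0.
Proof.
move=> sizeP; under eq_bigr do rewrite (horner_coef_wide _ sizeP) mulr_sumr.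
rewrite exchange_big /=; apply: eq_bigr => i _.
rewrite !mxE mulr_sumr; apply: eq_bigr => b _; rewrite !mxE; ring.
Qed.

Lemma syndrome_eq0_low_weight (v : 'rV[F]_n) :
  syndrome H v = 0 -> (#|supp v| <= 3)%N -> v = 0.
Proof.
move=> v_ker v_low; apply/rowP => j; rewrite mxE; apply/eqP; apply: contraT => vj.
have jv : j \in supp v by rewrite inE.
pose P := \prod_(x <- [seq alpha k | k <- enum (supp v :\ j)]) ('X - x%:P).
have sizeP : (size P <= 3)%N.
  by rewrite size_prod_XsubC size_map -cardE; move: v_low; rewrite (cardsD1 j) jv.
have P_root k : k \in supp v :\ j -> root P (alpha k).
  by move=> kv; rewrite root_prod_XsubC map_f ?mem_enum.
have := syndrome_pairing v sizeP.
rewrite (bigD1 j) //= big1 => [|b bj]; last first.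
  have [vb0|vb] := eqVneq (v 0 b) 0; first by rewrite vb0 mulr0 mul0r.
  by rewrite (rootP (P_root b _)) ?mulr0 // !inE bj vb.
rewrite addr0 v_ker big1 => [|i _]; last by rewrite mxE mulr0.
move/eqP; rewrite !mulf_eq0 (negbTE (u_neq0 j)) (negbTE vj) /=.
rewrite -/(root P (alpha j)) root_prod_XsubC => /mapP[k].
by rewrite mem_enum => + /alpha_inj kj; rewrite kj !inE eqxx.
Qed.

Lemma bad_error_partner (e : 'rV[F]_n) : e \in bad_errors H ->
  #|supp e| = 2%N /\ exists e' : 'rV[F]_n,
    [/\ supp e' \subset ~: supp e, #|supp e'| = 2%N & syndrome H e' = syndrome H e].
Proof.
rewrite inE => /andP[/eqP e_wt /existsP[e' /and3P[e'_neq e'_wt /eqP same_syn]]].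
split=> //; exists e'.
have diff_ker : syndrome H (e - e') = 0 by rewrite syndromeB same_syn subrr.
have union_big : (4 <= #|supp e :|: supp e'|)%N.
  apply: leq_trans (subset_leq_card (suppB e e')).
  rewrite ltnNge; apply: contra_neqN e'_neq.
  by move/(syndrome_eq0_low_weight diff_ker)/eqP; rewrite subr_eq0 eq_sym => /eqP.
have [union_le union_eq] := leq_card_setU (supp e) (supp e').
rewrite /hwt -/(supp e) -/(supp e') in e_wt e'_wt.
have e'_card : #|supp e'| = 2%N.
  apply/eqP; rewrite eqn_leq e'_wt -(leq_add2l #|supp e|) {1}e_wt.
  exact: leq_trans union_big union_le.
split=> //; rewrite -disjoints_subset disjoint_sym -union_eq.
by rewrite eqn_leq union_le e_wt e'_card.
Qed.

Definition fiber (T T' : {set 'I_n}) : {set 'rV[F]_n} :=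
  [set e | (supp e == T) &&
           [exists e', (supp e' == T') && (syndrome H e' == syndrome H e)]].

Lemma partnered_eq (T T' : {set 'I_n}) (i : 'I_n) (e1 e2 e1' e2' : 'rV[F]_n) :
  (#|T :|: T'| <= 4)%N -> T' \subset ~: T -> i \in T ->
  supp e1 \subset T -> supp e2 \subset T -> supp e1' \subset T' -> supp e2' \subset T' ->
  syndrome H e1' = syndrome H e1 -> syndrome H e2' = syndrome H e2 ->
  e1 0 i = e2 0 i -> e1 = e2.
Proof.
move=> card_TT' T'T iT e1T e2T e1'T' e2'T' syn1 syn2 same_i.
have notT' j : j \in T -> j \notin T'.
  by move=> jT; apply: contraL jT => /(subsetP T'T); rewrite inE.
pose d := (e1 - e1') - (e2 - e2').
have d_ker : syndrome H d = 0 by rewrite /d !syndromeB syn1 syn2 !subrr.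
have d_supp : supp d \subset (T :|: T') :\ i.
  apply/subsetP => j; rewrite inE; apply: contraR; rewrite in_setD1 negb_and negbK.
  case/orP=> [/eqP ->|].
    have i_nT' := notT' i iT.
    by rewrite !mxE same_i (notin_supp_sub e1'T' i_nT') (notin_supp_sub e2'T' i_nT') subrr.
  rewrite in_setU negb_or => /andP[jT jT'].
  by rewrite !mxE (notin_supp_sub e1T jT) (notin_supp_sub e2T jT)
    (notin_supp_sub e1'T' jT') (notin_supp_sub e2'T' jT') !subrr.
have d_low : (#|supp d| <= 3)%N.
  apply: leq_trans (subset_leq_card d_supp) _.
  by move: card_TT'; rewrite (cardsD1 i (T :|: T')) in_setU iT.
have /rowP d0 := syndrome_eq0_low_weight d_ker d_low.
apply/rowP => j; have [jT|jT] := boolP (j \in T); last first.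
  by rewrite (notin_supp_sub e1T jT) (notin_supp_sub e2T jT).
have j_nT' := notT' j jT.
move: (d0 j); rewrite !mxE (notin_supp_sub e1'T' j_nT') (notin_supp_sub e2'T' j_nT') !subr0.
by move/eqP; rewrite subr_eq0 => /eqP.
Qed.

Lemma card_fiber (T T' : {set 'I_n}) :
  #|T| = 2%N -> T' \subset ~: T -> #|T'| = 2%N -> (#|fiber T T'| <= #|F| - 1)%N.
Proof.
move=> T_card T'T T'_card.
have [i iT] : exists i, i \in T by apply/set0Pn; rewrite -card_gt0 T_card.
have inj : {in fiber T T' &, injective (fun e : 'rV[F]_n => e 0 i)}.
  move=> e1 e2; rewrite !inE => /andP[/eqP e1T /existsP[e1' /andP[/eqP e1'T' /eqP syn1]]].
  move=> /andP[/eqP e2T /existsP[e2' /andP[/eqP e2'T' /eqP syn2]]].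
  apply: (partnered_eq (e1' := e1') (e2' := e2') _ T'T iT);
    rewrite ?e1T ?e2T ?e1'T' ?e2'T' //.
  by apply: leq_trans (leq_card_setU T T').1 _; rewrite T_card T'_card.
rewrite -(card_in_imset inj) subn1 -(cardsC1 (0 : F)); apply: subset_leq_card.
apply/subsetP => x /imsetP[e]; rewrite inE => /andP[/eqP eT _] ->.
by move: iT; rewrite -eT inE in_setC1.
Qed.

End ReedSolomon.

Lemma card_bigcup_le (I T : finType) (P : {pred I}) (G : I -> {set T}) :
  (#|\bigcup_(i in P) G i| <= \sum_(i in P) #|G i|)%N.
Proof.
elim/big_ind2: _ => [|m A k B mA kB|]; rewrite ?cards0 //.
by apply: leq_trans (leq_card_setU A B).1 _; apply: leq_add.
Qed.

Lemma card_bad_errors (F : finFieldType) (n : nat) (alpha u : 'I_n -> F) :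
  injective alpha -> (forall b, u b != 0) ->
  (#|bad_errors (rsH alpha u)| <= 'C(n, 2) * ('C(n - 2, 2) * (#|F| - 1)))%N.
Proof.
move=> alpha_inj u_neq0.
pose pairs := [set T : {set 'I_n} | #|T| == 2%N].
pose partners T := [set T' : {set 'I_n} | T' \subset ~: T & #|T'| == 2%N].
have cover : bad_errors (rsH alpha u) \subset
    \bigcup_(T in pairs) \bigcup_(T' in partners T) fiber alpha u T T'.
  apply/subsetP => e /(bad_error_partner alpha_inj u_neq0)[e_card [e' [e'e e'_card syn]]].
  apply/bigcupP; exists (supp e); first by rewrite inE e_card.
  apply/bigcupP; exists (supp e'); first by rewrite inE e'e e'_card.
  by rewrite inE eqxx; apply/existsP; exists e'; rewrite eqxx syn eqxx.
apply: leq_trans (subset_leq_card cover) _; apply: leq_trans (card_bigcup_le _ _) _.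
have -> : 'C(n, 2) = #|pairs| by rewrite card_draws card_ord.
rewrite -sum_nat_const.
apply: leq_sum => T; rewrite inE => /eqP T_card.
apply: leq_trans (card_bigcup_le _ _) _.
have -> : (n - 2 = #|~: T|)%N by have := cardsC T; rewrite T_card card_ord; lia.
rewrite -cards_draws -sum_nat_const; apply: leq_sum => T'.
by rewrite inE => /andP[T'T /eqP T'_card]; apply: card_fiber.
Qed.

Theorem mainTheorem9 (F : finFieldType) (n : nat) (alpha u : 'I_n -> F)
  (hn4 : (4 <= n)%N) (hnq : (n <= #|F|)%N)
  (halpha : injective alpha) (hu : forall b, u b != 0) :
  (#|bad_errors (rsH alpha u)|%:R : rat) <=
    ((n - 2) * (n - 3))%:R / (2 * (#|F| - 1))%:R
      * ((#|F| - 1) ^ 2 * 'C(n, 2))%:R.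
Proof.
have q1_neq0 : (#|F| - 1)%:R != 0 :> rat by rewrite pnatr_eq0; lia.
have -> : ((n - 2) * (n - 3) = 2 * 'C(n - 2, 2))%N.
  by rewrite -mul_bin_diag bin1; congr (_ * _)%N; lia.
apply: le_trans (_ : ('C(n, 2) * ('C(n - 2, 2) * (#|F| - 1)))%:R <= _).
  by rewrite ler_nat card_bad_errors.
rewrite le_eqVlt !natrM; apply/predU1P; left.
by field; rewrite q1_neq0.
Qed.
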